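(* Let $f_A, f_R$ and $F$ be as in the context, with $\chi = 1$ (so that $F(d,T) = (f_A+f_R)(|d|)\,d$). For $R>0$, the ring state $\delta_{(R,0)}$ (the uniform probability measure on the circle of radius $R$ centred at the origin) is a nontrivial equilibrium state of the mean-field equation $\partial_t\rho + \nabla\cdot[\rho\,(F(\cdot,T)\ast\rho)] = 0$ if and only if $$\int_0^{\pi} (f_A+f_R)\Big(R\sqrt{(1-\cos\phi)^2+\sin^2\phi}\Big)\,(1-\cos\phi)\,d\phi = 0 .$$
   Context: Let $f_R, f_A:[0,\infty)\to\mathbb{R}$ be smooth integrable functions with $f_R\ge 0$ and $f_A\le 0$, such that there is $d_a>0$ with $(f_A+f_R)(\rho)\le 0$ for $\rho>d_a$ and $(f_A+f_R)(\rho)>0$ for $0\le\rho<d_a$. For $\chi\in[0,1]$, $s=(0,1)$, $l=(1,0)$, let $T=\chi\, s\otimes s + l\otimes l$ and define the interaction force $F(d,T) = f_A(|d|)\,T d + f_R(|d|)\,d$ for $d\in\mathbb{R}^2$; assume $F$ is $C^1$ with bounded total derivatives in both arguments. Assume moreover there is $d_e>d_a$ such that $\chi f_A+f_R$ is strictly decreasing on $[0,d_e]$ for all $\chi\in[0,1]$. A Borel probability measure $\mu$ on $\mathbb{R}^2$ is an equilibrium state of the mean-field equation if $K(x):=(F(\cdot,T)\ast\mu)(x)=\int_{\mathbb{R}^2}F(x-y,T)\,d\mu(y)$ satisfies $K\in L^1_{loc}(d\mu)$ and $K=0$ on $\mathrm{supp}(\mu)$ $\mu$-a.e. For $R>0$,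 $r\ge 0$, the ellipse state $\delta_{(R,r)}$ is the probability measure uniformly distributed on $\{(R\cos\phi,(R+r)\sin\phi):\phi\in[0,2\pi)\}$; $\delta_{(R,0)}$ is the ring state of radius $R$. *)

From HB Require Import structures.
From mathcomp Require Import all_boot all_order all_algebra.
From mathcomp Require Import all_classical all_reals all_analysis.
From mathcomp Require Import measurable_realfun.
Set Implicit Arguments.
Unset Strict Implicit.
Unset Printing Implicit Defensive.
Import Order.TTheory GRing.Theory Num.Theory.
Import numFieldNormedType.Exports.
Local Open Scope classical_set_scope.
Local Open Scope ring_scope.

(* Points of R^2 are pairs (x.1, x.2); the measurable structure is the
   product (= Borel) sigma-algebra. *)

Definition enorm {R : realType} (d : R * R) : R := Num.sqrt (d.1 ^+ 2 + d.2 ^+ 2).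

(* T = chi s(x)s + l(x)l with s = (0,1), l = (1,0), i.e. T = diag(1, chi);
   Tapp chi d = T d. *)
Definition Tapp {R : realType} (chi : R) (d : R * R) : R * R := (d.1, chi * d.2).

Definition Fint {R : realType} (fA fR : R -> R) (chi : R) (d : R * R) : R * R :=
  (fA (enorm d) * (Tapp chi d).1 + fR (enorm d) * d.1,
   fA (enorm d) * (Tapp chi d).2 + fR (enorm d) * d.2).

Definition Kfield {R : realType} (fA fR : R -> R) (chi : R)
  (mu : {measure set (R * R)%type -> \bar R}) (x : R * R) : R * R :=
  (Rintegral mu setT (fun y => (Fint fA fR chi (x.1 - y.1, x.2 - y.2)).1),
   Rintegral mu setT (fun y => (Fint fA fR chi (x.1 - y.1, x.2 - y.2)).2)).

Definition msupp {R : realType} (mu : {measure set (R * R)%type -> \bar R}) : set (R * R)%type :=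
  [set x | forall U : set (R * R)%type, open U -> U x -> (0 < mu U)%E].

Definition equilibrium {R : realType} (fA fR : R -> R) (chi : R)
  (mu : probability (R * R)%type R) : Prop :=
  (forall C : set (R * R)%type, compact C ->
      mu.-integrable C (fun x => (enorm (Kfield fA fR chi mu x))%:E))
  /\ {ae mu, forall x, msupp mu x -> Kfield fA fR chi mu x = (0, 0)}.

Definition ellipse_param {R : realType} (a r : R) (phi : measurableTypeR R) : (R * R)%type :=
  (a * cos phi, (a + r) * sin phi).

Lemma measurable_ellipse_param {R : realType} (a r : R) :
  measurable_fun setT (ellipse_param a r).
Proof.
apply: measurable_fun_pair; apply: continuous_measurable_fun => x.
- by apply: cvgM; [exact: cvg_cst | exact: continuous_cos].
- by apply: cvgM; [exact: cvg_cst | exact: continuous_sin].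
Qed.

HB.instance Definition _ {R : realType} (a r : R) :=
  isMeasurableFun.Build _ _ _ _ (ellipse_param a r) (measurable_ellipse_param a r).

Lemma two_pi_gt0 {R : realType} : (0 : R) < pi *+ 2.
Proof. by rewrite mulrn_wgt0 // pi_gt0. Qed.

(* The ellipse state delta_(a, r): push-forward of the uniform probability
   on the parameter interval [0, 2 pi] by the parametrisation
   (the endpoint 2 pi is a null set, so this is the uniform distribution
   over phi in [0, 2 pi)). *)
Definition ellipse_state {R : realType} (a r : R) : probability (R * R)%type R :=
  distribution (uniform_prob (@two_pi_gt0 R)) (ellipse_param a r).

Definition ring_state {R : realType} (a : R) : probability (R * R)%type R :=
  ellipse_state a 0.

From HB Require Import structures.
From mathcomp Require Import all_boot all_order all_algebra.
From mathcomp Require Import all_classical all_reals all_analysis.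
From mathcomp Require Import measurable_realfun.
From mathcomp Require Import ring lra.
Import Order.TTheory GRing.Theory Num.Theory.
Import numFieldNormedType.Exports.
Local Open Scope classical_set_scope.
Local Open Scope ring_scope.

(* For chi = 1 the force is F(d) = g(|d|) d with g = f_A + f_R.  Parametrise the
   ring of radius a by p(t) = a (cos t, sin t) and substitute s + t for the
   integration variable: F(p(t) - p(s + t)) is the rotation by t of
   a g(c(s)) (1 - cos s, - sin s), where c(s) = |p(0) - p(s)| is even and
   2 pi-periodic.  The second component is odd and integrates to 0, the first is
   even, so K(p(t)) = (a / pi) I (cos t, sin t) with I the integral of the
   statement; hence K vanishes on the ring iff I = 0.  Every point of the ring
   lies in the support of the ring state and the ring carries the state, so the
   a.e. condition holds iff I = 0; when I = 0, |K| integrates to 0 against the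
   state, which gives the local integrability. *)

Section interval_integral.
Context {R : realType}.
Local Notation mu := (@lebesgue_measure R).
Implicit Types (f : R -> R) (a b c : R).

Lemma continuous_integrable_itv f a b : continuous f ->
  mu.-integrable `[a, b] (EFin \o f).
Proof.
move=> cf; apply: continuous_compact_integrable; first exact: segment_compact.
exact: continuous_subspaceT.
Qed.

Lemma Rintegral_itv_split f a b c : continuous f -> a <= b -> b <= c ->
  Rintegral mu `[a, c] f = Rintegral mu `[a, b] f + Rintegral mu `[b, c] f.
Proof.
move=> cf ab bc; apply/eqP; rewrite addrC -subr_eq; apply/eqP.
rewrite Rintegral_itvB ?bnd_simp//; last exact: continuous_integrable_itv.
rewrite Rintegral_itv_obnd_cbnd//.
apply: integrableS (continuous_integrable_itv _ b c cf) => //.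
exact: subset_itv_oc_cc.
Qed.

Lemma Rintegral_itv_shift f a b c : continuous f -> a <= b ->
  Rintegral mu `[a, b] (fun x => f (x + c)) = Rintegral mu `[a + c, b + c] f.
Proof.
move=> cf ab; have D1 : (shift c : R -> R)^`()%classic = cst 1.
  by apply/funext => x; rewrite derive1E; apply: derive_val; exact: is_derive_shift.
rewrite /Rintegral (@integration_by_substitution_increasing _ (shift c)) //.
- by congr fine; apply: eq_integral => x _; rewrite D1 /= mulr1.
- by move=> x y _ _; rewrite /shift ltrD2r.
- by rewrite D1 => x _; exact: cvg_cst.
- by rewrite D1; exact: is_cvg_cst.
- by rewrite D1; exact: is_cvg_cst.
- split.
  + by move=> x _; apply: derivableD.
  + by apply: cvg_at_right_filter; apply: cvgD; [exact: cvg_id | exact: cvg_cst].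
  + by apply: cvg_at_left_filter; apply: cvgD; [exact: cvg_id | exact: cvg_cst].
- exact: continuous_subspaceT.
Qed.

Lemma Rintegral_itv_opp f a b : continuous f -> a <= b ->
  Rintegral mu `[- b, - a] f = Rintegral mu `[a, b] (fun x => f (- x)).
Proof.
move=> cf ab; rewrite /Rintegral integration_by_substitution_oppr//.
exact: continuous_subspaceT.
Qed.

End interval_integral.

Section periodic_integral.
Context {R : realType}.
Local Notation mu := (@lebesgue_measure R).
Variables (h : R -> R) (T : R).
Hypotheses (ch : continuous h) (T_ge0 : 0 <= T) (hT : periodic h T).

Let shift_period : (fun x => h (x + T)) = h. Proof. exact/funext. Qed.

Lemma Rintegral_periodic_shift (t : R) : 0 <= t <= T ->
  Rintegral mu `[0, T] (fun x => h (x + t)) = Rintegral mu `[0, T] h.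
Proof.
move=> /andP[t0 tT].
have wrap : Rintegral mu `[T, T + t] h = Rintegral mu `[0, t] h.
  by rewrite -[X in `[X, _]]add0r [T + t]addrC -Rintegral_itv_shift // shift_period.
rewrite Rintegral_itv_shift // add0r (Rintegral_itv_split _ t T) ?lerDl //.
by rewrite wrap addrC -Rintegral_itv_split.
Qed.

Lemma Rintegral_odd_periodic : (forall x, h (- x) = - h x) ->
  Rintegral mu `[0, T] h = 0.
Proof.
move=> hN.
have back : Rintegral mu `[- T, 0] h = Rintegral mu `[0, T] h.
  by rewrite -{1}shift_period Rintegral_itv_shift ?oppr_le0 // addNr add0r.
have : Rintegral mu `[0, T] h = - Rintegral mu `[0, T] h.
  rewrite -{1}back -[X in `[- T, X]]oppr0 Rintegral_itv_opp //.
  under eq_Rintegral do rewrite hN -mulN1r.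
  by rewrite RintegralZl ?mulN1r //; exact: continuous_integrable_itv.
lra.
Qed.

End periodic_integral.

Lemma Rintegral_even_periodic {R : realType} (h : R -> R) (a : R) :
  continuous h -> 0 <= a -> periodic h (a *+ 2) ->
  (forall x, h (- x) = h x) ->
  Rintegral lebesgue_measure `[0, a *+ 2] h =
  2 * Rintegral lebesgue_measure `[0, a] h.
Proof.
move=> ch a0 hT hN.
rewrite (Rintegral_itv_split _ 0 a) ?mulr2n ?lerDl //.
have -> : Rintegral lebesgue_measure `[a, a + a] h =
          Rintegral lebesgue_measure `[- a, 0] h.
  rewrite -[in RHS](funext hT) Rintegral_itv_shift ?oppr_le0 //.
  by rewrite mulr2n addKr add0r.
rewrite -[X in `[- a, X]]oppr0 Rintegral_itv_opp //.
under [X in _ + X]eq_Rintegral do rewrite hN.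
by rewrite mulrDl mul1r.
Qed.

Section euclidean_norm.
Context {R : realType}.

Lemma continuous_enorm : continuous (@enorm R).
Proof.
move=> d; apply: continuous_comp; last exact: sqrt_continuous.
by apply: cvgD; apply: cvgM; first [exact: cvg_fst | exact: cvg_snd].
Qed.

Lemma measurable_enorm : measurable_fun setT (@enorm R).
Proof.
apply: (measurableT_comp (continuous_measurable_fun (@sqrt_continuous R))).
by apply: measurable_funD; apply: measurable_funX;
  [exact: measurable_fst | exact: measurable_snd].
Qed.

Lemma enorm_eq0 (d : R * R) : enorm d = 0 -> d = (0, 0).
Proof.
case: d => x y; rewrite /enorm /= => /eqP; rewrite sqrtr_eq0 => xy_le0.
have /andP[/eqP x2 /eqP y2] : (x ^+ 2 == 0) && (y ^+ 2 == 0).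
  by rewrite -paddr_eq0 ?sqr_ge0 // eq_le xy_le0 addr_ge0 ?sqr_ge0.
by move/eqP: x2; rewrite sqrf_eq0 => /eqP ->; move/eqP: y2; rewrite sqrf_eq0 => /eqP ->.
Qed.

End euclidean_norm.

Lemma measurable_fun_Rintegral_section {R : realType} {d1 d2}
    {T1 : measurableType d1} {T2 : measurableType d2}
    (P : {sigma_finite_measure set T2 -> \bar R}) (H : T1 * T2 -> R) :
  measurable_fun setT H ->
  measurable_fun setT (fun x => Rintegral P setT (fun y => H (x, y))).
Proof.
move=> mH; have mHE : measurable_fun setT (EFin \o H) by apply/measurable_EFinP.
have mHp := measurable_fun_fubini_tonelli_F (m2 := P) _
  (measurable_funepos mHE) (funepos_ge0 _).
have mHn := measurable_fun_fubini_tonelli_F (m2 := P) _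
  (measurable_funeneg mHE) (funeneg_ge0 _).
have := measurableT_comp (fine_measurable measurableT) (emeasurable_funB mHp mHn).
apply: eq_measurable_fun => x _; rewrite /Rintegral integralE /fubini_F /=.
by congr (fine (_ - _)); apply: eq_integral => y _; rewrite ?funeposE ?funenegE.
Qed.

(* Compact subsets of [R * R] are not known to be measurable for the product
   sigma-algebra, so local integrability is obtained by this comparison. *)
Lemma ge0_le_integralT_nonmeasurable {R : realType} d (T : measurableType d)
    (m : {measure set T -> \bar R}) (f g : T -> \bar R) :
  (forall x, 0 <= g x)%E -> (forall x, g x <= f x)%E ->
  (\int[m]_x g x <= \int[m]_x f x)%E.
Proof.
move=> g0 gf; have f0 x : (0 <= f x)%E by exact: le_trans (g0 x) (gf x).
rewrite !ge0_integralTE //; apply: ereal_sup_le => _ [h hg <-].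
by exists h => //= x; exact: le_trans (hg x) (gf x).
Qed.

Section interaction_force.
Context {R : realType} {fA fR : R -> R}.
Hypotheses (cA : continuous fA) (cR : continuous fR).

Lemma continuous_Fint chi : continuous (Fint fA fR chi).
Proof.
have cnA : continuous (fA \o @enorm R).
  by move=> d; apply: continuous_comp; [exact: continuous_enorm | exact: cA].
have cnR : continuous (fR \o @enorm R).
  by move=> d; apply: continuous_comp; [exact: continuous_enorm | exact: cR].
move=> d.
have c1 : (fun e => (Fint fA fR chi e).1) @ d --> (Fint fA fR chi d).1.
  by apply: cvgD; apply: cvgM; first [exact: cnA | exact: cnR | exact: cvg_fst].
have c2 : (fun e => (Fint fA fR chi e).2) @ d --> (Fint fA fR chi d).2.
  apply: cvgD; apply: cvgM; try first [exact: cnA | exact: cnR | exact: cvg_snd].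
  by apply: cvgM; [exact: cvg_cst | exact: cvg_snd].
exact: cvg_pair c1 c2.
Qed.

Lemma measurable_Fint chi : measurable_fun setT (Fint fA fR chi).
Proof.
have mnA := measurableT_comp (continuous_measurable_fun cA) measurable_enorm.
have mnR := measurableT_comp (continuous_measurable_fun cR) measurable_enorm.
apply: measurable_fun_pair; apply: measurable_funD; apply: measurable_funM => //=;
  by [exact: measurable_fst | exact: measurable_snd
     | apply: measurable_funM; [exact: measurable_cst | exact: measurable_snd]].
Qed.

Lemma Fint1E d :
  Fint fA fR 1 d = ((fA + fR) (enorm d) * d.1, (fA + fR) (enorm d) * d.2).
Proof. by rewrite /Fint /Tapp /= mul1r !mulrDl. Qed.

Lemma measurable_Fint_diff chi (x : R * R) :
  measurable_fun setT (fun y : R * R => Fint fA fR chi (x.1 - y.1, x.2 - y.2)).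
Proof.
apply: measurableT_comp (measurable_Fint chi) _.
by apply: measurable_fun_pair; apply: measurable_funB;
  by [exact: measurable_cst | exact: measurable_fst | exact: measurable_snd].
Qed.

Lemma continuous_Fint_diff chi (x : R * R) {q : R -> R * R} : continuous q ->
  continuous (fun s => Fint fA fR chi (x.1 - (q s).1, x.2 - (q s).2)).
Proof.
move=> cq s; apply: continuous_comp; last exact: continuous_Fint.
have c1 : (fun s => x.1 - (q s).1) @ s --> x.1 - (q s).1.
  by apply: cvgB; [exact: cvg_cst | apply: continuous_comp; [exact: cq | exact: cvg_fst]].
have c2 : (fun s => x.2 - (q s).2) @ s --> x.2 - (q s).2.
  by apply: cvgB; [exact: cvg_cst | apply: continuous_comp; [exact: cq | exact: cvg_snd]].
exact: cvg_pair c1 c2.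
Qed.

Lemma measurable_Kfield chi (P : probability (R * R)%type R) :
  measurable_fun setT (Kfield fA fR chi P).
Proof.
have mdiff : measurable_fun setT
    (fun z : (R * R) * (R * R) => (z.1.1 - z.2.1, z.1.2 - z.2.2)).
  by apply: measurable_fun_pair; apply: measurable_funB;
    apply: measurableT_comp; by [exact: measurable_fst | exact: measurable_snd].
have mF := measurableT_comp (measurable_Fint chi) mdiff.
rewrite /Kfield; apply: measurable_fun_pair.
- exact: (measurable_fun_Rintegral_section P
    (fun z : (R * R) * (R * R) => (Fint fA fR chi (z.1.1 - z.2.1, z.1.2 - z.2.2)).1)
    (measurableT_comp measurable_fst mF)).
- exact: (measurable_fun_Rintegral_section P
    (fun z : (R * R) * (R * R) => (Fint fA fR chi (z.1.1 - z.2.1, z.1.2 - z.2.2)).2)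
    (measurableT_comp measurable_snd mF)).
Qed.

End interaction_force.

Section uniform_probability.
Context {R : realType} {a b : R} (ab : a < b).
Local Notation U := (uniform_prob ab).
Local Notation mu := (@lebesgue_measure R).

Lemma integral_uniform_continuous (f : R -> R) :
  continuous f ->
  (\int[U]_x (f x)%:E =
   (b - a)^-1%:E * \int[mu]_(x in `[a, b]) (f x)%:E)%E.
Proof.
move=> cf; have mf : measurable_fun setT (EFin \o f).
  by apply/measurable_EFinP; exact: continuous_measurable_fun.
have fab := continuous_integrable_itv _ a b cf.
rewrite integralE [in RHS]integralE.
rewrite integral_uniform //; last exact: measurable_funepos.
rewrite integral_uniform //; last exact: measurable_funeneg.
rewrite -(fineK (integrable_pos_fin_num _ fab)) //.
rewrite -(fineK (integrable_neg_fin_num _ fab)) //.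
by rewrite -!EFinM -!EFinB mulrBr.
Qed.

Lemma uniform_prob_itv_gt0 {c d : R} : a <= c -> c < d -> d <= b ->
  (0 < U `]c, d[)%E.
Proof.
move=> ac cd db; rewrite /uniform_prob.
rewrite (eq_integral (fun=> (b - a)^-1%:E)); last first.
  move=> x; rewrite inE /= in_itv /= => /andP[cx xd].
  by rewrite /uniform_pdf ifT //; apply/andP; split; lra.
rewrite integral_cst //= lebesgue_measure_itv /= lte_fin cd -EFinD -EFinM lte_fin.
by rewrite mulr_gt0 // ?invr_gt0 subr_gt0.
Qed.

Lemma uniform_prob_open_gt0 (V : set R) (t : R) : open V -> V t -> a <= t <= b ->
  (0 < U V)%E.
Proof.
move=> oV Vt /andP[a_le_t t_le_b].
have /nbhs_ballP[e /= e0 teV] : nbhs t V by move: oV; rewrite openE => /(_ t Vt).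
pose delta := Num.min e ((b - a) / 2).
have delta0 : 0 < delta by rewrite lt_min e0 divr_gt0 // subr_gt0.
have delta_e : delta <= e by rewrite ge_min lexx.
have delta_ab : delta <= (b - a) / 2 by rewrite ge_min lexx orbT.
have [c [ac cb ct]] : exists c, [/\ a <= c, c + delta <= b &
    forall x, c < x < c + delta -> `|t - x| < e].
  have [tm|tm] := lerP t ((a + b) / 2).
  - exists t; split; [lra | lra | move=> x /andP[tx xt]].
    by rewrite ltr_norml; apply/andP; split; lra.
  - exists (t - delta); split; [lra | lra | move=> x /andP[tx xt]].
    by rewrite ltr_norml; apply/andP; split; lra.
apply: (lt_le_trans (uniform_prob_itv_gt0 ac _ cb)); first by rewrite ltrDl.
apply: le_measure; rewrite ?inE; [exact: measurable_itv | exact: open_measurable |].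
move=> x /=; rewrite in_itv /= => cx; apply: teV.
by rewrite -ball_normE /= ct.
Qed.

Lemma uniform_prob_null_itv (A : set R) : measurable A -> U A = 0%E ->
  exists t, a <= t <= b /\ ~ A t.
Proof.
move=> mA UA0; apply: contrapT => noA.
have itvA : `[a, b] `<=` A.
  move=> t /=; rewrite in_itv /= => t_in.
  by apply: contrapT => nAt; apply: noA; exists t.
have : (U `[a, b] <= U A)%E by apply: le_measure; rewrite ?inE.
by rewrite UA0 /uniform_prob integral_uniform_pdf1 // lee_fin ler10.
Qed.

Lemma uniform_prob_eq0 (A : set R) : (forall t, a <= t <= b -> ~ A t) -> U A = 0%E.
Proof.
move=> noA; rewrite /uniform_prob integral_uniform_pdf.
rewrite (_ : _ `&` _ = set0) ?integral_set0 //.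
by apply/seteqP; split => // t [At]; rewrite /= in_itv /= => /noA.
Qed.

End uniform_probability.

Section ellipse_state_integral.
Context {R : realType}.
Local Notation mu := (@lebesgue_measure R).

Lemma continuous_ellipse_param (a r : R) : continuous (ellipse_param a r).
Proof.
move=> t.
have cx : (fun s => a * cos s) @ t --> a * cos t.
  by apply: cvgM; [exact: cvg_cst | exact: continuous_cos].
have cy : (fun s => (a + r) * sin s) @ t --> (a + r) * sin t.
  by apply: cvgM; [exact: cvg_cst | exact: continuous_sin].
exact: cvg_pair cx cy.
Qed.

Lemma Rintegral_ellipse_state (a r : R) (h : R * R -> R) :
  measurable_fun setT h -> continuous (h \o ellipse_param a r) ->
  Rintegral (ellipse_state a r) setT h =
  (pi *+ 2)^-1 * Rintegral mu `[0, pi *+ 2] (h \o ellipse_param a r).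
Proof.
move=> mh ch; have mhE : measurable_fun setT (EFin \o h) by apply/measurable_EFinP.
have mp := measurable_ellipse_param a r.
have hp_int := continuous_integrable_itv _ 0 (pi *+ 2) ch.
have int_hp : (uniform_prob two_pi_gt0).-integrable (ellipse_param a r @^-1` setT)
    ((EFin \o h) \o ellipse_param a r).
  apply/integrableP; split; first exact: measurableT_comp mhE mp.
  rewrite (integral_uniform_continuous two_pi_gt0 (fun x => `|h (ellipse_param a r x)|)).
    apply: lte_mul_pinfty => //; last by case/integrableP: hp_int.
    by rewrite lee_fin invr_ge0 subr0 ltW // two_pi_gt0.
  by move=> x; apply: continuous_comp; [exact: ch | exact: norm_continuous].
rewrite /Rintegral /ellipse_state /distribution /=.
rewrite integral_pushforward // preimage_setT integral_uniform_continuous // subr0.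
by rewrite fineM //; exact: integrable_fin_num hp_int.
Qed.

End ellipse_state_integral.

Section ellipse_state_support.
Context {R : realType} {a r : R}.
Local Notation p := (ellipse_param a r).

Lemma msupp_ellipse_state (t : R) : 0 <= t <= pi *+ 2 ->
  msupp (ellipse_state a r) (p t).
Proof.
move=> t_in O oO Ot.
change (0 < uniform_prob two_pi_gt0 (p @^-1` O))%E.
apply: (uniform_prob_open_gt0 _ _ t) => //.
by apply: open_comp => // x _; exact: continuous_ellipse_param.
Qed.

Lemma ellipse_state_null_param {N : set (R * R)} : measurable N ->
  ellipse_state a r N = 0%E -> exists t, 0 <= t <= pi *+ 2 /\ ~ N (p t).
Proof.
move=> mN; apply: uniform_prob_null_itv.
by rewrite -[X in measurable X]setTI; exact: measurable_ellipse_param.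
Qed.

Lemma ellipse_state_eq0 (N : set (R * R)) :
  (forall t, 0 <= t <= pi *+ 2 -> ~ N (p t)) -> ellipse_state a r N = 0%E.
Proof. exact: uniform_prob_eq0. Qed.

Lemma integral_ellipse_state_eq0 (f : R * R -> \bar R) :
  measurable_fun setT f -> (forall x, 0 <= f x)%E ->
  (forall t, 0 <= t <= pi *+ 2 -> f (p t) = 0%E) ->
  (\int[ellipse_state a r]_x f x = 0)%E.
Proof.
move=> mf f0 fp0; have mp := measurable_ellipse_param a r.
rewrite ge0_integral_pushforward // preimage_setT integral_uniform //.
- by rewrite integral0_eq ?mule0 // => t; rewrite /= in_itv /= => /fp0.
- exact: measurableT_comp mf mp.
- by move=> t; exact: f0.
Qed.

End ellipse_state_support.

Definition ring_chord {R : realType} (a x : R) : R := a * enorm (1 - cos x, sin x).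

Lemma continuous_ring_chord {R : realType} (a : R) : continuous (ring_chord a).
Proof.
move=> x; apply: cvgM; first exact: cvg_cst.
apply: (continuous_comp (f := fun s => (1 - cos s, sin s))); last exact: continuous_enorm.
have c1 : (fun s => 1 - cos s) @ x --> 1 - cos x.
  by apply: cvgB; [exact: cvg_cst | exact: continuous_cos].
have c2 : (fun s => sin s) @ x --> sin x by exact: continuous_sin.
exact: cvg_pair c1 c2.
Qed.

Section ring_state_field.
Context {R : realType} {fA fR : R -> R} {a : R}.
Hypotheses (cA : continuous fA) (cR : continuous fR) (a_ge0 : 0 <= a).
Local Notation mu := (@lebesgue_measure R).
Local Notation p := (ellipse_param a 0).

Let radial x := (fA + fR) (ring_chord a x) * (1 - cos x).
Let tangential x := (fA + fR) (ring_chord a x) * sin x.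

Lemma ellipse_param_ring_diff (t x : R) :
  ((p t).1 - (p (x + t)).1, (p t).2 - (p (x + t)).2) =
  (a * (cos t * (1 - cos x) + sin t * sin x),
   a * (sin t * (1 - cos x) - cos t * sin x)).
Proof. by rewrite /ellipse_param /= addr0 cosD sinD; congr pair; ring. Qed.

Lemma enorm_ellipse_param_ring_diff (t x : R) :
  enorm ((p t).1 - (p (x + t)).1, (p t).2 - (p (x + t)).2) = ring_chord a x.
Proof.
rewrite ellipse_param_ring_diff /ring_chord /enorm /=.
have -> : (a * (cos t * (1 - cos x) + sin t * sin x)) ^+ 2 +
          (a * (sin t * (1 - cos x) - cos t * sin x)) ^+ 2 =
          a ^+ 2 * (((1 - cos x) ^+ 2 + sin x ^+ 2) * (cos t ^+ 2 + sin t ^+ 2)).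
  by ring.
by rewrite cos2Dsin2 mulr1 sqrtrM ?sqr_ge0 // sqrtr_sqr ger0_norm.
Qed.

Let Fint_ring_diff (t x : R) :
  Fint fA fR 1 ((p t).1 - (p (x + t)).1, (p t).2 - (p (x + t)).2) =
  (a * (cos t * radial x + sin t * tangential x),
   a * (sin t * radial x + - cos t * tangential x)).
Proof.
rewrite Fint1E enorm_ellipse_param_ring_diff ellipse_param_ring_diff /=.
by rewrite /radial /tangential; congr pair; ring.
Qed.

Let continuous_radial : continuous radial.
Proof.
move=> x; apply: cvgM; last by apply: cvgB; [exact: cvg_cst | exact: continuous_cos].
apply: continuous_comp; first exact: continuous_ring_chord.
by apply: continuousD; [exact: cA | exact: cR].
Qed.

Let continuous_tangential : continuous tangential.
Proof.
move=> x; apply: cvgM; last exact: continuous_sin.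
apply: continuous_comp; first exact: continuous_ring_chord.
by apply: continuousD; [exact: cA | exact: cR].
Qed.

Let Rintegral_profile (alpha beta : R) :
  Rintegral mu `[0, pi *+ 2] (fun x => a * (alpha * radial x + beta * tangential x)) =
  a * (alpha * (2 * Rintegral mu `[0, pi] radial)).
Proof.
have radial_even : Rintegral mu `[0, pi *+ 2] radial = 2 * Rintegral mu `[0, pi] radial.
  apply: Rintegral_even_periodic => //; first exact: pi_ge0.
    by move=> x; rewrite /radial /ring_chord cosD2pi sinD2pi.
  by move=> x; rewrite /radial /ring_chord cosN sinN /enorm /= sqrrN.
have tangential_odd : Rintegral mu `[0, pi *+ 2] tangential = 0.
  apply: Rintegral_odd_periodic => //; first exact: ltW two_pi_gt0.
    by move=> x; rewrite /tangential /ring_chord cosD2pi sinD2pi.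
  by move=> x; rewrite /tangential /ring_chord cosN sinN /enorm /= sqrrN mulrN.
have cZ (f : R -> R) (c : R) : continuous f -> continuous (fun x => c * f x).
  by move=> cf x; apply: cvgM; [exact: cvg_cst | exact: cf].
have cZradial := cZ _ alpha continuous_radial.
have cZtangential := cZ _ beta continuous_tangential.
rewrite RintegralZl //; last first.
  apply: continuous_integrable_itv => x.
  by apply: cvgD; [exact: cZradial | exact: cZtangential].
rewrite RintegralD //; try exact: continuous_integrable_itv.
rewrite !RintegralZl //; try exact: continuous_integrable_itv.
by rewrite radial_even tangential_odd mulr0 addr0.
Qed.

Let Rintegral_ring_state (h : R * R -> R) (t : R) : 0 <= t <= pi *+ 2 ->
  measurable_fun setT h -> continuous (h \o p) ->
  Rintegral (ring_state a) setT h =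
  (pi *+ 2)^-1 * Rintegral mu `[0, pi *+ 2] (fun x => h (p (x + t))).
Proof.
move=> t_in mh ch; rewrite Rintegral_ellipse_state //.
rewrite (Rintegral_periodic_shift _ _ ch _ _ _ t_in) //; first exact: ltW two_pi_gt0.
by move=> x; rewrite /comp /ellipse_param cosD2pi sinD2pi.
Qed.

Lemma Kfield_ring_state (t : R) : 0 <= t <= pi *+ 2 ->
  Kfield fA fR 1 (ring_state a) (p t) =
  (a / pi * Rintegral mu `[0, pi] radial * cos t,
   a / pi * Rintegral mu `[0, pi] radial * sin t).
Proof.
move=> t_in.
(* [pi] is generalised so that [field] does not unfold it. *)
have scale (x y : R) : (pi *+ 2)^-1 * (a * (y * (2 * x))) = a / pi * x * y.
  by move: (pi : R) (pi_gt0 R) => q /lt0r_neq0 q_neq0; field.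
have mF := measurable_Fint_diff cA cR 1 (p t).
have cF := continuous_Fint_diff cA cR 1 (p t) (continuous_ellipse_param a 0).
rewrite /Kfield; congr pair; rewrite (Rintegral_ring_state _ _ t_in).
- under eq_Rintegral do rewrite Fint_ring_diff /=.
  by rewrite Rintegral_profile scale.
- exact: measurableT_comp measurable_fst mF.
- by move=> s; exact: continuous_comp (cF s) cvg_fst.
- under eq_Rintegral do rewrite Fint_ring_diff /=.
  by rewrite Rintegral_profile scale.
- exact: measurableT_comp measurable_snd mF.
- by move=> s; exact: continuous_comp (cF s) cvg_snd.
Qed.

End ring_state_field.

Section ring_equilibrium.
Context {R : realType} {fA fR : R -> R} {a : R}.
Hypotheses (cA : continuous fA) (cR : continuous fR) (a_gt0 : 0 < a).
Local Notation p := (ellipse_param a 0).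
Local Notation K := (Kfield fA fR 1 (ring_state a)).
Local Notation I := (Rintegral lebesgue_measure `[0, pi]
  (fun x => (fA + fR) (ring_chord a x) * (1 - cos x))).

Lemma Kfield_ring_state_eq0 (t : R) : 0 <= t <= pi *+ 2 ->
  K (p t) = (0, 0) <-> I = 0.
Proof.
move=> t_in; rewrite (Kfield_ring_state cA cR (ltW a_gt0) _ t_in); split; last first.
  by move=> ->; rewrite mulr0 !mul0r.
case; set c := a / pi * I => Kx Ky.
have : c = 0.
  by rewrite -[LHS]mulr1 -(cos2Dsin2 t) mulrDr !expr2 !mulrA Kx Ky !mul0r addr0.
move/eqP; rewrite mulf_eq0 => /orP[|/eqP //].
by rewrite mulf_eq0 invr_eq0 (gt_eqF a_gt0) (gt_eqF (pi_gt0 R)).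
Qed.

Lemma equilibrium_ring_state : equilibrium fA fR 1 (ring_state a) <-> I = 0.
Proof.
have mK : measurable_fun setT (enorm \o K).
  exact: measurableT_comp measurable_enorm (measurable_Kfield cA cR _ _).
split.
- move=> [_ [N [mN N0 notN_eq0]]].
  have [t [t_in Nt]] := ellipse_state_null_param mN N0.
  apply/(Kfield_ring_state_eq0 _ t_in); apply: contrapT => Kt.
  by apply: Nt; apply: notN_eq0 => /(_ (msupp_ellipse_state _ t_in)).
- move=> I0; have K0 t : 0 <= t <= pi *+ 2 -> K (p t) = (0, 0).
    by move=> t_in; apply/(Kfield_ring_state_eq0 _ t_in).
  have enormK0 t : 0 <= t <= pi *+ 2 -> enorm (K (p t)) = 0.
    by move=> /K0 ->; rewrite /enorm /= expr0n add0r sqrtr0.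
  split.
  + move=> C _; apply/integrableP; split.
      by apply: measurable_funTS; apply/measurable_EFinP.
    rewrite integral_mkcond.
    apply: (@le_lt_trans _ _ (\int[ring_state a]_x (enorm (K x))%:E)%E).
      apply: ge0_le_integralT_nonmeasurable => x; rewrite /patch; case: ifPn => _ //=;
        by rewrite lee_fin ?normr_ge0 ?sqrtr_ge0 // ger0_norm ?sqrtr_ge0.
    rewrite /ring_state integral_ellipse_state_eq0 ?ltry //.
    * by apply/measurable_EFinP.
    * by move=> x; rewrite lee_fin sqrtr_ge0.
    * by move=> t /enormK0 ->.
  + pose N := setT `&` ((enorm \o K) @^-1` ~` [set 0]).
    exists N; split.
    * exact: mK (measurableC _).
    * by apply: ellipse_state_eq0 => t /enormK0 /= Kt0 [_]; apply.
    * move=> x /= notK0; split => // /enorm_eq0 Kx0.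
      by apply: notK0 => _; exact: Kx0.
Qed.

End ring_equilibrium.

Theorem lemma3p4 (R : realType) (fA fR : R -> R) (da de : R)
  (* f_A, f_R smooth (on a neighbourhood of [0, oo); values off [0, oo) are irrelevant) *)
  (smA : forall (n : nat) (x : R), derivable (derive1n n fA) x 1)
  (smR : forall (n : nat) (x : R), derivable (derive1n n fR) x 1)
  (* f_A, f_R integrable on [0, oo) *)
  (intA : lebesgue_measure.-integrable `[0%R, +oo[ (fun x => (fA x)%:E))
  (intR : lebesgue_measure.-integrable `[0%R, +oo[ (fun x => (fR x)%:E))
  (* signs *)
  (fR_ge0 : forall x : R, 0 <= x -> 0 <= fR x)
  (fA_le0 : forall x : R, 0 <= x -> fA x <= 0)
  (* the distance d_a *)
  (da_gt0 : 0 < da)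
  (fAR_le0 : forall rho : R, da < rho -> fA rho + fR rho <= 0)
  (fAR_gt0 : forall rho : R, 0 <= rho -> rho < da -> 0 < fA rho + fR rho)
  (* F(., T) is C^1 with bounded total derivatives in both arguments *)
  (F_diff : forall chi : R, 0 <= chi <= 1 ->
     forall x : (R * R)%type, differentiable (Fint fA fR chi) x)
  (F_C1 : forall chi : R, 0 <= chi <= 1 ->
     forall v : (R * R)%type, continuous (fun x : (R * R)%type => 'd (Fint fA fR chi) x v))
  (F_bdd_d : exists M : R, forall chi : R, 0 <= chi <= 1 ->
     forall x v : (R * R)%type, enorm ('d (Fint fA fR chi) x v) <= M * enorm v)
  (F_bdd_T : exists M : R, forall d : (R * R)%type,
     `|fA (enorm d)| * enorm d <= M)
  (* the distance d_e *)
  (da_lt_de : da < de)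
  (decr : forall chi : R, 0 <= chi <= 1 ->
     forall x y : R, 0 <= x -> x < y -> y <= de ->
       chi * fA y + fR y < chi * fA x + fR x)
  (Rad : R) (Rad_gt0 : 0 < Rad) :
  equilibrium fA fR 1 (ring_state Rad) <->
  Rintegral lebesgue_measure `[0%R, pi]
    (fun phi : R => (fA + fR) (Rad * Num.sqrt ((1 - cos phi) ^+ 2 + sin phi ^+ 2))
                    * (1 - cos phi)) = 0.
Proof.
have derivable_continuous (f : R -> R) :
    (forall (n : nat) (x : R), derivable (derive1n n f) x 1) -> continuous f.
  by move=> df x; apply/differentiable_continuous/derivable1_diffP; exact: df 0%N x.
exact: equilibrium_ring_state (derivable_continuous _ smA)
  (derivable_continuous _ smR) Rad_gt0.
Qed.
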